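(* Let $E=(\mathcal{X},\mathcal{Y},\mathcal{Z},f,g)$ be an information-lossless finite-state encoder with $s$ states, and let $K$ be its Kraft matrix. Then the spectral radius of $K$ satisfies $\rho(K)\le 1$. Consequently, for every positive integer $\ell$, the matrix $K^\ell$, whose $(z,z')$ entry equals $\sum_{\{x^\ell\in\mathcal{X}^\ell:\ g(z,x^\ell)=z'\}}2^{-L[f(z,x^\ell)]}$, also satisfies $\rho(K^\ell)\le 1$.
   Context: A finite-state (FS) encoder is a quintuple $E=(\mathcal{X},\mathcal{Y},\mathcal{Z},f,g)$, where $\mathcal{X}$ is a finite source alphabet of size $\alpha$, $\mathcal{Y}$ is a finite set of binary strings (possibly containing the empty string, of length $0$), $\mathcal{Z}$ is a finite set of $s$ states, $f:\mathcal{Z}\times\mathcal{X}\to\mathcal{Y}$ is the output function and $g:\mathcal{Z}\times\mathcal{X}\to\mathcal{Z}$ is the next-state function. For $z\in\mathcal{Z}$ and $x^n=(x_1,\dots,x_n)\in\mathcal{X}^n$, set $z_1=z$, $z_{i+1}=g(z_i,x_i)$; write $g(z,x^n)=z_{n+1}$ and let $f(z,x^n)$ denote the binary string obtained by concatenating $f(z_1,x_1),\dots,f(z_n,x_n)$; its length is $L[f(z,x^n)]=\sum_{i=1}^n L[f(z_i,x_i)]$, where $L(\cdot)$ denotes the length of a binary string. The encoder is information lossless (IL) if for every $z\in\mathcal{Z}$ and every $n\ge1$, the map $x^n\mapsto (f(z,x^n),g(z,x^n))$ is injective on $\mathcal{X}^n$ (i.e., the initial state, the output bit string and the final state determine the input).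 The Kraft matrix of $E$ is the $s\times s$ nonnegative matrix $K$ with entries $K_{zz'}=\sum_{\{x\in\mathcal{X}:\ g(z,x)=z'\}}2^{-L[f(z,x)]}$ (an empty sum is $0$). $\rho(\cdot)$ denotes spectral radius. *)

(* Scalars: algC (algebraic complex numbers), which contains
   all entries of the Kraft matrix (dyadic rationals) and all its eigenvalues. *)
From HB Require Import structures.
From mathcomp Require Import all_boot all_order all_algebra all_field.
Set Implicit Arguments. Unset Strict Implicit. Unset Printing Implicit Defensive.
Import Order.TTheory GRing.Theory Num.Theory.
Local Open Scope ring_scope.

Fixpoint fs_out (X : Type) (s : nat) (f : 'I_s -> X -> seq bool)
  (g : 'I_s -> X -> 'I_s) (z : 'I_s) (xs : seq X) : seq bool :=
  match xs with
  | [::] => [::]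
  | x :: xs' => f z x ++ fs_out f g (g z x) xs'
  end.

Fixpoint fs_state (X : Type) (s : nat) (g : 'I_s -> X -> 'I_s)
  (z : 'I_s) (xs : seq X) : 'I_s :=
  match xs with
  | [::] => z
  | x :: xs' => fs_state g (g z x) xs'
  end.

Definition info_lossless (X : finType) (s : nat) (f : 'I_s -> X -> seq bool)
  (g : 'I_s -> X -> 'I_s) : Prop :=
  forall (z : 'I_s) (n : nat), (0 < n)%N ->
  forall u v : n.-tuple X,
    fs_out f g z u = fs_out f g z v ->
    fs_state g z u = fs_state g z v -> u = v.

Definition kraft_matrix (X : finType) (s : nat) (f : 'I_s -> X -> seq bool)
  (g : 'I_s -> X -> 'I_s) : 'M[algC]_s :=
  \matrix_(z, z') \sum_(x : X | g z x == z') (2%:R : algC) ^- size (f z x).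

Definition kraft_matrix_l (X : finType) (s : nat) (f : 'I_s -> X -> seq bool)
  (g : 'I_s -> X -> 'I_s) (l : nat) : 'M[algC]_s :=
  \matrix_(z, z') \sum_(t : l.-tuple X | fs_state g z t == z')
      (2%:R : algC) ^- size (fs_out f g z t).

(* Spectral radius: maximum modulus of the (complex) eigenvalues, i.e. of the
   roots of the characteristic polynomial (listed with multiplicity);
   0 for the empty matrix. *)
Definition spectral_radius (n : nat) (A : 'M[algC]_n) : algC :=
  \big[Num.max/0]_(z <- sval (closed_field_poly_normal (char_poly A))) `|z|.

(* Proof idea: by the path expansion, the (z, z') entry of K^l is the weight
   sum over inputs x^l leading from z to z'.  Grouping them by output length k,
   information losslessness makes x^l |-> f(z, x^l) injective on each group, so
   it has at most 2^k members of weight 2^-k each.  As k <= l * max |f(z, x)|,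
   the entries of K^l grow at most linearly in l; for an eigenvector v with
   eigenvalue z this gives |z|^l <= C (l + 1) for all l, whence |z| <= 1,
   since otherwise Bernoulli's inequality makes |z|^(2l) grow like l^2. *)
From HB Require Import structures.
From mathcomp Require Import all_boot all_order all_algebra all_field.
From mathcomp Require Import ring zify.
Set Implicit Arguments. Unset Strict Implicit. Unset Printing Implicit Defensive.
Import Order.TTheory GRing.Theory Num.Theory.
Local Open Scope ring_scope.

Lemma bernoulli_ler (R : numDomainType) (r : R) (m : nat) :
  1 <= r -> 1 + m%:R * (r - 1) <= r ^+ m.
Proof.
move=> r_ge1; have r_ge0 : 0 <= r := le_trans ler01 r_ge1.
elim: m => [|m IHm]; first by rewrite mul0r addr0 expr0.
have step : 1 + m.+1%:R * (r - 1) <= (1 + m%:R * (r - 1)) * r.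
  rewrite -subr_ge0 (_ : _ - _ = m%:R * ((r - 1) * (r - 1))); last first.
    by rewrite mulrS; ring.
  by rewrite mulr_ge0 ?ler0n // mulr_ge0 // subr_ge0.
by rewrite exprSr (le_trans step) // ler_wpM2r.
Qed.

Lemma le1_of_exp_le_linear (R : archiNumFieldType) (r : R) (c : nat) :
  0 <= r -> (forall m, r ^+ m <= (c * m.+1)%:R) -> r <= 1.
Proof.
move=> r_ge0 r_exp_le; rewrite real_leNgt ?ger0_real ?real1 //.
apply/negP => r_gt1; set d := r - 1.
have d_gt0 : 0 < d by rewrite subr_gt0.
have dd_gt0 : 0 < d * d by rewrite mulr_gt0.
have x_ge0 : 0 <= (3 * c)%:R / (d * d) by rewrite divr_ge0 ?ler0n ?ltW.
have := archi_boundP x_ge0; set N := Num.bound _ => N_gt.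
have N_gt0 : (0 < N)%N by rewrite -(ltr0n R) (le_lt_trans x_ge0).
have Nd_le : N%:R * d <= r ^+ N.
  by apply: le_trans (bernoulli_ler N (ltW r_gt1)); rewrite ler_wpDl ?ler01.
(* Squaring Bernoulli beats the linear bound at exponent 2N. *)
have : N%:R * (d * d) * N%:R <= (3 * c)%:R * N%:R.
  apply: le_trans (_ : r ^+ (N + N) <= _).
    rewrite exprD (_ : _ * _ * _ = N%:R * d * (N%:R * d)); last by ring.
    by rewrite ler_pM // mulr_ge0 ?ler0n ?ltW.
  by rewrite (le_trans (r_exp_le _)) // -natrM ler_nat; nia.
rewrite ler_pM2r ?ltr0n // -(ler_pdivlMr _ _ dd_gt0) => /(lt_le_trans N_gt).
by rewrite ltxx.
Qed.

Section SpectralRadius.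
Variables (n : nat) (A : 'M[algC]_n).

Lemma spectral_radius_le (b : algC) :
  0 <= b -> (forall z, eigenvalue A z -> `|z| <= b) -> spectral_radius A <= b.
Proof.
move=> b_ge0 eig_le; rewrite /spectral_radius.
case: closed_field_poly_normal => r /= char_poly_A.
rewrite big_seq_cond; apply: bigmax_le => // z /andP[z_in_r _].
apply: eig_le; rewrite eigenvalue_root_char char_poly_A rootE hornerZ.
by move: (root_prod_XsubC r z); rewrite z_in_r rootE => /eqP ->; rewrite mulr0.
Qed.

Lemma eigenvalue_normX_le (z : algC) (m : nat) (B : algC) :
  eigenvalue A z -> (forall i j, `|(A ^+ m) i j| <= B) -> `|z| ^+ m <= n%:R * B.
Proof.
move=> /eigenvalueP[v vA v_neq0] Am_le.
have vAm : v *m A ^+ m = z ^+ m *: v.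
  elim: m {Am_le} => [|m IHm]; first by rewrite expr0 scale1r mulmx1.
  by rewrite exprSr -mulmxE mulmxA IHm -scalemxAl vA scalerA -exprSr.
set S : algC := \sum_i `|v 0 i|.
have S_gt0 : 0 < S.
  rewrite lt0r sumr_ge0 ?andbT //; apply: contra_neq v_neq0.
  move=> /(psumr_eq0P (fun i _ => normr_ge0 _)) v0.
  by apply/matrixP => i j; rewrite (ord1 i) mxE; apply/normr0_eq0/v0.
(* Triangle inequality on each entry of [z^m v = v A^m], summed over the columns. *)
have : `|z| ^+ m * S <= \sum_(j < n) \sum_i `|v 0 i| * B.
  rewrite /S mulr_sumr; apply: ler_sum => j _.
  have := congr1 (fun M : 'rV_n => M 0 j) vAm; rewrite !mxE -normrX -normrM => <-.
  apply: le_trans (ler_norm_sum _ _ _) _.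
  by apply: ler_sum => i _; rewrite normrM ler_wpM2l.
rewrite -mulr_suml sumr_const card_ord -/S => zS_le.
by rewrite -(ler_pM2r S_gt0) (le_trans zS_le) // -mulrnAr mulrC mulr_natl.
Qed.

Lemma spectral_radius_le1_of_linear_growth (c : nat) :
  (forall m i j, `|(A ^+ m) i j| <= (c * m.+1)%:R) -> spectral_radius A <= 1.
Proof.
move=> Am_le; apply: spectral_radius_le => // z Az.
apply: (@le1_of_exp_le_linear _ _ (n * c)) => // m.
by rewrite -mulnA natrM eigenvalue_normX_le.
Qed.

End SpectralRadius.

Section KraftMatrix.
Variables (X : finType) (s : nat) (f : 'I_s -> X -> seq bool) (g : 'I_s -> X -> 'I_s).

Local Notation K := (kraft_matrix f g).
Local Notation w k := ((2%:R : algC) ^- k).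

Lemma kraft_matrix_l0 : kraft_matrix_l f g 0 = 1%:M.
Proof.
apply/matrixP => z z'; rewrite !mxE.
rewrite (eq_bigl (fun=> z == z')) => [|t]; last by rewrite (tuple0 t).
rewrite (eq_bigr (fun=> 1)) => [|t _]; last by rewrite (tuple0 t) /= expr0 invr1.
case: (z =P z') => [_|_]; first by rewrite sumr_const card_tuple.
by rewrite big_pred0.
Qed.

Lemma kraft_matrix_lS l : kraft_matrix_l f g l.+1 = K *m kraft_matrix_l f g l.
Proof.
apply/matrixP => z z'; rewrite !mxE.
rewrite (reindex (fun p : X * l.-tuple X => [tuple of p.1 :: p.2])) /=; last first.
  exists (fun t => (thead t, [tuple of behead t])) => [[x t] _ | t _] /=.
    by congr pair; apply: val_inj.
  by rewrite [RHS]tuple_eta.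
transitivity (\sum_(x : X) \sum_(t : l.-tuple X | fs_state g (g z x) t == z')
    w (size (f z x)) * w (size (fs_out f g (g z x) t))).
  rewrite pair_big_dep /=; apply: eq_bigr => -[x t] _ /=.
  by rewrite size_cat exprD invfM.
under [RHS]eq_bigr => y _ do rewrite !mxE mulr_suml.
rewrite (partition_big (g z) xpredT) //=.
by apply: eq_bigr => y _; apply: eq_bigr => x /eqP <-; rewrite mulr_sumr.
Qed.

Lemma kraft_matrix_pow l : K ^+ l = kraft_matrix_l f g l.
Proof.
elim: l => [|l IHl]; first by rewrite expr0 kraft_matrix_l0.
by rewrite exprS IHl kraft_matrix_lS mulmxE.
Qed.

Definition max_codeword_size : nat := \max_(p : 'I_s * X) size (f p.1 p.2).

Lemma size_fs_out_le z (xs : seq X) :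
  (size (fs_out f g z xs) <= size xs * max_codeword_size)%N.
Proof.
elim: xs z => [//|x xs IHxs] z /=; rewrite size_cat mulSn leq_add //.
exact: (@leq_bigmax _ (fun p : 'I_s * X => size (f p.1 p.2)) (z, x)).
Qed.

Hypothesis lossless : info_lossless f g.

Lemma info_lossless_tuple z l (u v : l.-tuple X) :
  fs_out f g z u = fs_out f g z v -> fs_state g z u = fs_state g z v -> u = v.
Proof.
case: l u v => [|l] u v; last exact: lossless.
by rewrite (tuple0 u) (tuple0 v).
Qed.

(* Injectivity of the output on these inputs embeds them into [k.-tuple bool]. *)
Lemma card_inputs_of_output_size l z z' k :
  (#|[pred t : l.-tuple X |
      (fs_state g z t == z') && (size (fs_out f g z t) == k)]| <= 2 ^ k)%N.
Proof.
pose code (t : l.-tuple X) : k.-tuple bool :=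
  insubd (nseq_tuple k false) (fs_out f g z t).
rewrite -(card_in_imset (f := code)) => [|u v]; last first.
  rewrite !inE => /andP[/eqP uz' uk] /andP[/eqP vz' vk] code_uv.
  apply: (@info_lossless_tuple z); last by rewrite uz' vz'.
  rewrite -(insubdK (nseq_tuple k false) uk) -(insubdK (nseq_tuple k false) vk).
  by rewrite -/(code u) -/(code v) code_uv.
by rewrite (leq_trans (max_card _)) // card_tuple card_bool.
Qed.

Lemma kraft_matrix_l_ge0 l z z' : 0 <= kraft_matrix_l f g l z z'.
Proof. by rewrite mxE sumr_ge0 // => t _; rewrite invr_ge0 exprn_ge0 ?ler0n. Qed.

(* Each output length k <= l * max_codeword_size contributes at most 2^k * 2^-k = 1. *)
Lemma kraft_matrix_l_le l z z' :
  kraft_matrix_l f g l z z' <= (l * max_codeword_size).+1%:R.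
Proof.
rewrite mxE; set N := (l * max_codeword_size)%N.
rewrite (partition_big (fun t : l.-tuple X => inord (size (fs_out f g z t)) : 'I_N.+1)
  xpredT) //=.
rewrite -[N.+1 in Y in _ <= Y]card_ord -sumr_const; apply: ler_sum => k _.
have size_out_lt (t : l.-tuple X) : (size (fs_out f g z t) < N.+1)%N.
  by rewrite ltnS /N -{2}(size_tuple t) size_fs_out_le.
rewrite (eq_bigl [pred t : l.-tuple X |
    (fs_state g z t == z') && (size (fs_out f g z t) == k)]); last first.
  move=> t /=; congr (_ && _); apply/eqP/eqP => [<- | k_eq].
    by rewrite inordK.
  by apply: val_inj; rewrite /= inordK // k_eq.
rewrite (eq_bigr (fun _ => w k)) => [|t /andP[_ /eqP ->] //].
rewrite sumr_const -[_ *+ #|_|]mulr_natr.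
have w_ge0 : 0 <= w k by rewrite invr_ge0 exprn_ge0 ?ler0n.
apply: le_trans (ler_wpM2l w_ge0 _) (_ : w k * (2 ^ k)%:R <= 1).
  by rewrite ler_nat card_inputs_of_output_size.
by rewrite natrX mulVf // expf_neq0 // pnatr_eq0.
Qed.

End KraftMatrix.

Unset Implicit Arguments.
Set Strict Implicit.

Theorem theorem1 (X : finType) (s : nat) (f : 'I_s -> X -> seq bool)
  (g : 'I_s -> X -> 'I_s) :
  info_lossless f g ->
  spectral_radius (kraft_matrix f g) <= 1 /\
  (forall l : nat, (0 < l)%N ->
     (kraft_matrix f g) ^+ l = kraft_matrix_l f g l /\
     spectral_radius ((kraft_matrix f g) ^+ l) <= 1).
Proof.
move=> lossless; set K := kraft_matrix f g.
have K_pow_le m z z' : `|(K ^+ m) z z'| <= (m * max_codeword_size f).+1%:R.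
  by rewrite kraft_matrix_pow ger0_norm ?kraft_matrix_l_ge0 ?kraft_matrix_l_le.
have rho_K_pow_le1 l : spectral_radius (K ^+ l) <= 1.
  apply: (spectral_radius_le1_of_linear_growth (c := (l * max_codeword_size f).+1)).
  move=> m z z'; rewrite -exprM (le_trans (K_pow_le _ z z')) // ler_nat mulnAC.
  exact: ltn_mul (ltnSn _) (ltnSn m).
split; first by rewrite -[K]expr1 rho_K_pow_le1.
by move=> l _; split; [exact: kraft_matrix_pow | exact: rho_K_pow_le1].
Qed.
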